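(* Let $I$ be an instance of 2-SCSS-$(k,1)$ given by a directed graph $G=(V,E)$ with edge weights $\omega:E\to\mathbb{R}^{\geq 0}$ and terminals $s,t$, and let $I'$ be the Token Game constructed from $I$ as described in the context. Then $\mathrm{OPT}(I)\leq \mathrm{OPT}(I')$.
   Context: 2-SCSS-$(k,1)$: find $k$ paths $F_1,\dots,F_k$ from $s$ to $t$ and one path $B$ from $t$ to $s$ minimizing $\sum_{e\in E}\omega(e)\max\{|\{i: e\in F_i\}|,\ [e\in B]\}$; $\mathrm{OPT}(I)$ is this minimum. The Token Game $I'$: tokens $\mathbf{b},\mathbf{f}_1,\dots,\mathbf{f}_k$; states are vectors $\bar v=(v_0,v_1,\dots,v_k)\in V^{k+1}$ ($v_0$ the location of $\mathbf{b}$, $v_i$ that of $\mathbf{f}_i$); start state $(s,\dots,s)$, end state $(t,\dots,t)$. From each state $\bar v$ the moves are: (Backward) for each edge $(w,v_0)\in E$, move to the state obtained by replacing $v_0$ by $w$, at cost $\omega(w,v_0)$; (Forward) for each $i\in[k]$ and each edge $(v_i,x)\in E$, move to the state obtained by replacing $v_i$ by $x$, at cost $\omega(v_i,x)$; (Flip) for each $i\in[k]$, move to the state obtained by swapping $v_0$ and $v_i$ (new coordinate $0$ is $v_i$, new coordinate $i$ is $v_0$, others unchanged), at cost equal to the weight of a shortest $v_i\leadsto v_0$ path in $G$. $\mathrm{OPT}(I')$ is the minimum total cost of a sequence of moves from the start state to the end state. *)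

From HB Require Import structures.
From mathcomp Require Import all_boot all_order all_algebra.
From mathcomp Require Import all_classical all_reals ereal.
Set Implicit Arguments. Unset Strict Implicit. Unset Printing Implicit Defensive.
Import Order.TTheory GRing.Theory Num.Theory.
Local Open Scope classical_set_scope.
Local Open Scope ring_scope.

(* A path from u is a vertex sequence p with [path e u p]; it ends at [last u p]. *)

Definition edges_of (V : eqType) (u : V) (p : seq V) : seq (V * V) :=
  zip (u :: p) p.

Definition is_walk (V : finType) (e : rel V) (u v : V) (p : seq V) : bool :=
  path e u p && (last u p == v).

Definition walk_weight (R : realType) (V : finType) (w : V -> V -> R)
    (u : V) (p : seq V) : R :=
  \sum_(x <- edges_of u p) w x.1 x.2.

(* weight of a shortest u ~> v path in G (+oo if none) *)
Definition sp_dist (R : realType) (V : finType) (e : rel V) (w : V -> V -> R)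
    (u v : V) : \bar R :=
  ereal_inf [set c | exists p, is_walk e u v p /\ c = (walk_weight w u p)%:E].

Definition scss_cost (R : realType) (V : finType) (e : rel V) (w : V -> V -> R)
    (s t : V) (k : nat) (F : 'I_k -> seq V) (B : seq V) : R :=
  \sum_(x : V * V | e x.1 x.2)
     w x.1 x.2 *
     (maxn #|[set i : 'I_k | x \in edges_of s (F i)]| (x \in edges_of t B))%:R.

Definition OPT_scss (R : realType) (V : finType) (e : rel V) (w : V -> V -> R)
    (s t : V) (k : nat) : \bar R :=
  ereal_inf [set c | exists (F : 'I_k -> seq V) (B : seq V),
     [/\ forall i, is_walk e s t (F i), is_walk e t s B
       & c = (scss_cost e w s t F B)%:E]].

(* states: vectors (v_0, v_1, ..., v_k); index 0 = token b, index i = token f_i *)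
Definition state (V : finType) (k : nat) := {ffun 'I_k.+1 -> V}.

Definition upd (V : finType) (k : nat) (sv : state V k) (i : 'I_k.+1) (x : V)
  : state V k := [ffun j => if j == i then x else sv j].

Definition swap0 (V : finType) (k : nat) (sv : state V k) (i : 'I_k.+1)
  : state V k :=
  [ffun j => if j == ord0 then sv i else if j == i then sv ord0 else sv j].

Inductive tg_move (R : realType) (V : finType) (e : rel V) (w : V -> V -> R)
    (k : nat) : state V k -> state V k -> \bar R -> Prop :=
  | tg_backward (sv : state V k) (x : V) :
      e x (sv ord0) ->
      tg_move e w sv (upd sv ord0 x) (w x (sv ord0))%:E
  | tg_forward (sv : state V k) (i : 'I_k.+1) (x : V) :
      i != ord0 -> e (sv i) x ->
      tg_move e w sv (upd sv i x) (w (sv i) x)%:E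
  | tg_flip (sv : state V k) (i : 'I_k.+1) :
      i != ord0 ->
      tg_move e w sv (swap0 sv i) (sp_dist e w (sv i) (sv ord0)).

Inductive tg_run (R : realType) (V : finType) (e : rel V) (w : V -> V -> R)
    (k : nat) : state V k -> state V k -> \bar R -> Prop :=
  | tg_nil (sv : state V k) : tg_run e w sv sv 0%E
  | tg_cons (sv sv' sv'' : state V k) (c c' : \bar R) :
      tg_move e w sv sv' c -> tg_run e w sv' sv'' c' ->
      tg_run e w sv sv'' (c + c')%E.

Definition OPT_token (R : realType) (V : finType) (e : rel V) (w : V -> V -> R)
    (s t : V) (k : nat) : \bar R :=
  ereal_inf [set c | @tg_run R V e w k [ffun => s] [ffun => t] c].

From HB Require Import structures.
From mathcomp Require Import all_boot all_order all_algebra.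
From mathcomp Require Import all_classical all_reals ereal.
From mathcomp Require Import lra.
Import Order.TTheory GRing.Theory Num.Theory.
Local Open Scope ring_scope.
Set Implicit Arguments. Unset Strict Implicit.

(** A run of the token game is simulated by a solution that is built along it:
    each forward token f_i drags a walk F_i from s to its current position, and
    the backward token b is preceded by a walk B from its position to s (so B
    grows at its front).  A backward or forward move appends its edge to one
    walk; a flip by f_i appends a path q from v_i to v_0 to F_i and prepends it
    to B, after which b sits at v_i.  Since an edge costs w(e) times the
    maximum of its two multiplicities, adding q to F_i and to B raises the cost
    by at most w(q).  Hence the cost of the built solution never exceeds the
    cost of the run; as shortest-path distances are infima, each flip is
    realised up to an arbitrary slack. *)

Lemma card_set_classicE (T : finType) (P : pred T) :
  #|[set x | P x]%classic| = #|[set x | P x]%SET|.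
Proof. by apply: eq_card => x; rewrite inE unfold_in /= asboolb. Qed.

Lemma card_set_update_le (I : finType) (P P' : pred I) (j0 : I) (b : bool) :
  (forall j, j != j0 -> P' j = P j) -> (P' j0 -> P j0 || b) ->
  (#|[set j | P' j]| <= #|[set j | P j]| + b)%N.
Proof.
move=> eqP' sub0; case: b sub0 => [_|]; last rewrite orbF addn0 => sub0.
  have /subset_leq_card : [set j | P' j] \subset j0 |: [set j | P j].
    apply/fintype.subsetP => j; rewrite !inE.
    by case: (eqVneq j j0) => [->|/eqP' ->].
  by move/leq_trans; apply; rewrite cardsU1 addnC leq_add2l leq_b1.
apply: subset_leq_card; apply/fintype.subsetP => j; rewrite !inE.
by case: (eqVneq j j0) => [->|/eqP' ->] //; apply: sub0.
Qed.

Lemma sum_mul_count (R : numDomainType) (T : finType) (P : pred T) (f : T -> R)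
    (L : seq T) :
  all P L -> \sum_(x | P x) f x * (count_mem x L)%:R = \sum_(y <- L) f y.
Proof.
elim: L => [|y L IH] /=; first by rewrite big_nil big1 // => x _; rewrite mulr0.
case/andP=> Py /IH; rewrite big_cons => <-.
rewrite (bigD1 y Py) [in RHS](bigD1 y Py) /= addrA.
rewrite eqxx add1n -addn1 natrD mulrDr mulr1 [f y + _]addrC; congr (_ + _).
by apply: eq_bigr => x /andP[_ /negbTE yx]; rewrite eq_sym yx add0n.
Qed.

Lemma ler_sum_mul_count (R : numDomainType) (T : finType) (P : pred T) (f : T -> R)
    (a b : T -> nat) (L : seq T) :
  {in P, forall x, 0 <= f x} -> all P L ->
  (forall x, b x <= a x + count_mem x L)%N ->
  \sum_(x | P x) f x * (b x)%:R <= \sum_(x | P x) f x * (a x)%:R + \sum_(y <- L) f y.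
Proof.
move=> f_ge0 PL bLE; rewrite -(sum_mul_count f PL) -big_split /=.
by apply: ler_sum => x Px; rewrite -mulrDr -natrD ler_wpM2l ?f_ge0 ?ler_nat.
Qed.

Lemma edges_of_cat (T : eqType) (u : T) (p q : seq T) :
  edges_of u (p ++ q) = edges_of u p ++ edges_of (last u p) q.
Proof. by elim: p u => [|x p IH] u //=; rewrite /edges_of /= -IH. Qed.

Lemma is_walk_cat (T : finType) (e : rel T) (u v x : T) (p q : seq T) :
  is_walk e u v p -> is_walk e v x q -> is_walk e u x (p ++ q).
Proof.
by case/andP=> pp /eqP pv /andP[qp qx]; rewrite /is_walk cat_path last_cat pp pv qp.
Qed.

Lemma is_walk1 (T : finType) (e : rel T) (u v : T) : is_walk e u v [:: v] = e u v.
Proof. by rewrite /is_walk /= eqxx !andbT. Qed.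

Lemma path_edges_of (T : finType) (e : rel T) (u : T) (p : seq T) :
  path e u p -> all (fun y => e y.1 y.2) (edges_of u p).
Proof. by elim: p u => [|x p IH] u //= /andP[-> /IH]. Qed.

Lemma upd_liftE (T : finType) (k : nat) (sv : state T k) (j0 j : 'I_k) (x : T) :
  upd sv (lift ord0 j0) x (lift ord0 j) = if j == j0 then x else sv (lift ord0 j).
Proof. by rewrite ffunE (inj_eq lift_inj). Qed.

Lemma swap0_liftE (T : finType) (k : nat) (sv : state T k) (j0 j : 'I_k) :
  swap0 sv (lift ord0 j0) (lift ord0 j) =
  if j == j0 then sv ord0 else sv (lift ord0 j).
Proof. by rewrite ffunE lift_eqF (inj_eq lift_inj). Qed.

Section Simulation.
Variables (R : realType) (V : finType) (e : rel V) (w : V -> V -> R) (s : V) (k : nat).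
Hypothesis w_ge0 : forall u v, e u v -> 0 <= w u v.

Lemma walk_weight_ge0 (u : V) (p : seq V) : path e u p -> 0 <= walk_weight w u p.
Proof.
move/path_edges_of/allP => pE; rewrite /walk_weight big_seq.
by apply: sumr_ge0 => y /pE; apply: w_ge0.
Qed.

Lemma sp_dist_ge0 (u v : V) : (0 <= sp_dist e w u v)%E.
Proof.
apply: le_ereal_inf_tmp => c [p [/andP[pp _] ->]].
by rewrite lee_fin walk_weight_ge0.
Qed.

Lemma tg_move_ge0 (sv sv' : state V k) (c : \bar R) : tg_move e w sv sv' c -> (0 <= c)%E.
Proof. by case=> [? ? ex|? ? ? _ ex|? ? _]; rewrite ?lee_fin ?w_ge0 ?sp_dist_ge0. Qed.

Lemma tg_run_ge0 (sv sv' : state V k) (c : \bar R) : tg_run e w sv sv' c -> (0 <= c)%E.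
Proof. by elim=> // ? ? ? ? ? /tg_move_ge0 ? _ ?; apply: adde_ge0. Qed.

Lemma scss_cost_grow (t t' : V) (F F' : 'I_k -> seq V) (B B' : seq V)
    (L : seq (V * V)) :
  all (fun y => e y.1 y.2) L ->
  (forall y, #|[set i | y \in edges_of s (F' i)]| <=
             #|[set i | y \in edges_of s (F i)]| + (y \in L))%N ->
  {subset edges_of t' B' <= edges_of t B ++ L} ->
  scss_cost e w s t' F' B' <= scss_cost e w s t F B + \sum_(y <- L) w y.1 y.2.
Proof.
move=> LE cardF subB; apply: ler_sum_mul_count => // [x /w_ge0 //|y].
have memL : ((y \in L) <= count_mem y L)%N.
  by case: (boolP (y \in L)); rewrite // -has_pred1 has_count.
have memB : ((y \in edges_of t' B') <= (y \in edges_of t B) + (y \in L))%N.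
  case: (boolP (y \in edges_of t' B')) => // /subB.
  by rewrite mem_cat; do 2!case: (_ \in _).
rewrite !card_set_classicE geq_max; apply/andP; split.
- by apply: leq_trans (cardF y) _; apply: leq_add; first exact: leq_maxl.
- by apply: leq_trans memB _; apply: leq_add; first exact: leq_maxr.
Qed.

Definition extend_walk (F : 'I_k -> seq V) (j0 : 'I_k) (q : seq V) : 'I_k -> seq V :=
  fun j => if j == j0 then F j0 ++ q else F j.

Lemma card_extend_walk_le (F : 'I_k -> seq V) (j0 : 'I_k) (q : seq V) (y : V * V) :
  (#|[set i | y \in edges_of s (extend_walk F j0 q i)]| <=
   #|[set i | y \in edges_of s (F i)]| + (y \in edges_of (last s (F j0)) q))%N.
Proof.
apply: (card_set_update_le (j0 := j0)) => [j /negbTE ne|]; rewrite /extend_walk ?ne //.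
by rewrite eqxx edges_of_cat mem_cat.
Qed.

Definition realizes (sv : state V k) (F : 'I_k -> seq V) (B : seq V) : Prop :=
  (forall j, is_walk e s (sv (lift ord0 j)) (F j)) /\ is_walk e (sv ord0) s B.

Definition simulates (sv sv' : state V k) (c : \bar R) : Prop :=
  forall F B, realizes sv F B -> forall r : R, (c < r%:E)%E ->
  exists F' B', realizes sv' F' B' /\
    scss_cost e w s (sv' ord0) F' B' < scss_cost e w s (sv ord0) F B + r.

Lemma simulates_refl (sv : state V k) : simulates sv sv 0.
Proof. by move=> F B rF r; rewrite lte_fin => r_gt0; exists F, B; rewrite ltrDl. Qed.

Lemma simulates_trans (sv1 sv2 sv3 : state V k) (a b : \bar R) :
  (0 <= a)%E -> (0 <= b)%E ->
  simulates sv1 sv2 a -> simulates sv2 sv3 b -> simulates sv1 sv3 (a + b).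
Proof.
case: a b => [a| |] [b| |] // _ _ sim12 sim23 F B rF r; rewrite -EFinD lte_fin => abr.
pose d := (r - a - b) / 2.
have [F1 [B1 [rF1 cost1]]] := sim12 F B rF (a + d) ltac:(rewrite lte_fin /d; lra).
have [F2 [B2 [rF2 cost2]]] := sim23 F1 B1 rF1 (b + d) ltac:(rewrite lte_fin /d; lra).
by exists F2, B2; split => //; rewrite /d in cost1 cost2; lra.
Qed.

Lemma backward_simulates (sv : state V k) (x : V) :
  e x (sv ord0) -> simulates sv (upd sv ord0 x) (w x (sv ord0))%:E.
Proof.
move=> ex F B [rF rB] r; rewrite lte_fin => wr.
have upd0 : upd sv ord0 x ord0 = x by rewrite ffunE eqxx.
exists F, ([:: sv ord0] ++ B); split; first split.
- by move=> j; rewrite ffunE lift_eqF; apply: rF.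
- by rewrite upd0; apply: is_walk_cat _ rB; rewrite is_walk1.
rewrite upd0; apply: le_lt_trans
  (scss_cost_grow (t := sv ord0) (B := B) (L := [:: (x, sv ord0)]) _ _ _) _.
- by rewrite /= ex.
- by move=> y; apply: leq_addr.
- by move=> y; rewrite edges_of_cat !mem_cat orbC.
- by rewrite big_seq1 ltrD2l.
Qed.

Lemma forward_simulates (sv : state V k) (j0 : 'I_k) (x : V) :
  e (sv (lift ord0 j0)) x ->
  simulates sv (upd sv (lift ord0 j0) x) (w (sv (lift ord0 j0)) x)%:E.
Proof.
move=> ex F B [rF rB] r; rewrite lte_fin => wr.
have endF : last s (F j0) = sv (lift ord0 j0) by case/andP: (rF j0) => _ /eqP.
have upd0 : upd sv (lift ord0 j0) x ord0 = sv ord0 by rewrite ffunE eq_sym lift_eqF.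
exists (extend_walk F j0 [:: x]), B; split; first split.
- move=> j; rewrite upd_liftE /extend_walk; case: ifP => _; last exact: rF.
  by apply: is_walk_cat (rF j0) _; rewrite is_walk1.
- by rewrite upd0.
rewrite upd0; apply: le_lt_trans
  (scss_cost_grow (t := sv ord0) (B := B) (L := edges_of (last s (F j0)) [:: x]) _ _ _) _.
- by rewrite /= endF ex.
- by move=> y; apply: card_extend_walk_le.
- by move=> y; rewrite mem_cat => ->.
- by rewrite /= endF big_seq1 ltrD2l.
Qed.

Lemma flip_simulates (sv : state V k) (j0 : 'I_k) :
  simulates sv (swap0 sv (lift ord0 j0)) (sp_dist e w (sv (lift ord0 j0)) (sv ord0)).
Proof.
move=> F B [rF rB] r /ereal_inf_lt [_ [q [qW ->]]]; rewrite lte_fin => wr.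
have endF : last s (F j0) = sv (lift ord0 j0) by case/andP: (rF j0) => _ /eqP.
have swap00 : swap0 sv (lift ord0 j0) ord0 = sv (lift ord0 j0) by rewrite ffunE eqxx.
exists (extend_walk F j0 q), (q ++ B); split; first split.
- move=> j; rewrite swap0_liftE /extend_walk; case: ifP => _; last exact: rF.
  exact: is_walk_cat (rF j0) qW.
- by rewrite swap00; apply: is_walk_cat qW rB.
rewrite swap00; apply: le_lt_trans
  (scss_cost_grow (t := sv ord0) (B := B) (L := edges_of (last s (F j0)) q) _ _ _) _.
- by case/andP: qW; rewrite endF => /path_edges_of.
- by move=> y; apply: card_extend_walk_le.
- by case/andP: qW => _ /eqP qend y; rewrite edges_of_cat endF qend !mem_cat orbC.
- by rewrite endF ltrD2l.
Qed.

Lemma tg_move_simulates (sv sv' : state V k) (c : \bar R) :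
  tg_move e w sv sv' c -> simulates sv sv' c.
Proof.
case=> [{}sv x|{}sv i x|{}sv i]; first exact: backward_simulates.
- by rewrite eq_sym => /unlift_some [j0 -> _]; apply: forward_simulates.
- by rewrite eq_sym => /unlift_some [j0 -> _]; apply: flip_simulates.
Qed.

Lemma tg_run_simulates (sv sv' : state V k) (c : \bar R) :
  tg_run e w sv sv' c -> simulates sv sv' c.
Proof.
elim=> [{}sv|sv1 sv2 sv3 a b move12 run23 sim23]; first exact: simulates_refl.
apply: simulates_trans sim23; [exact: tg_move_ge0 move12|exact: tg_run_ge0 run23|].
exact: tg_move_simulates.
Qed.

End Simulation.

Unset Implicit Arguments.

Theorem lemma5 (R : realType) (V : finType) (e : rel V) (w : V -> V -> R)
    (hw : forall u v, e u v -> 0 <= w u v) (s t : V) (k : nat) :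
  (OPT_scss e w s t k <= OPT_token e w s t k)%E.
Proof.
apply: le_ereal_inf_tmp => c run_c; have := tg_run_ge0 hw run_c.
case: c run_c => [a run_a _| _ _|//]; last by rewrite leey.
have start : realizes e s [ffun => s] (fun _ : 'I_k => [::]) [::].
  by split => [j|]; rewrite ffunE /is_walk /= eqxx.
have start_cost : scss_cost e w s s (fun _ : 'I_k => [::]) [::] = 0.
  by rewrite /scss_cost big1 // => x _; rewrite card_set_classicE cards0 mulr0.
apply/lee_addgt0Pr => eps eps_gt0.
have [F [B [[rF rB] cost_lt]]] :=
  tg_run_simulates hw run_a start (r := a + eps) ltac:(by rewrite lte_fin ltrDl).
rewrite !ffunE start_cost add0r in cost_lt.
apply: (le_trans (ereal_inf_lbound _)).
  exists F, B; split => [j||//]; [move: (rF j)|move: rB]; by rewrite ffunE.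
by rewrite -EFinD lee_fin ltW.
Qed.
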